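(* Let $q$ be a prime power. If $M$ is a round matroid that contains a $U_{2,q+2}$-restriction and a $\mathrm{PG}(2,q)$-restriction, then $M$ has a $U_{2,q^2+1}$-minor.
   Context: A matroid $M$ is round if $E(M)$ cannot be partitioned into two sets each of rank less than $r(M)$. $\mathrm{PG}(2,q)$ is the projective plane over $\mathrm{GF}(q)$; $U_{2,m}$ is the uniform matroid of rank $2$ on $m$ elements. *)

From HB Require Import structures.
From mathcomp Require Import all_boot all_order all_algebra.
Set Implicit Arguments. Unset Strict Implicit. Unset Printing Implicit Defensive.

Local Open Scope ring_scope.
Import GRing.Theory.

(* A matroid with ground set E (a subset of a finite type T) given by a rank
   function r; only the values of r on subsets of E matter. *)
Definition is_matroid (T : finType) (E : {set T}) (r : {set T} -> nat) : Prop :=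
  [/\ (forall X : {set T}, X \subset E -> (r X <= #|X|)%N),
      (forall X Y : {set T}, X \subset Y -> Y \subset E -> (r X <= r Y)%N) &
      (forall X Y : {set T}, X \subset E -> Y \subset E ->
         (r (X :|: Y) + r (X :&: Y) <= r X + r Y)%N)].

Definition round (T : finType) (E : {set T}) (r : {set T} -> nat) : Prop :=
  forall X Y : {set T}, X :|: Y = E -> X :&: Y = set0 ->
    r X = r E \/ r Y = r E.

Definition matroid_iso (T1 T2 : finType) (E1 : {set T1}) (r1 : {set T1} -> nat)
    (E2 : {set T2}) (r2 : {set T2} -> nat) : Prop :=
  exists f : T1 -> T2,
    [/\ {in E1 &, injective f}, f @: E1 = E2 &
        forall Y : {set T1}, Y \subset E1 -> r2 (f @: Y) = r1 Y].

Definition unif_ground (m : nat) : {set 'I_m} := setT.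
Definition unif_rank (k m : nat) (Y : {set 'I_m}) : nat := minn #|Y| k.

(* PG(2,F): points are the 1-dimensional subspaces of F^3, each represented
   canonically by the square matrix <<v>> (v a nonzero row vector); the rank
   of a set of points is the dimension of their span. *)
Definition PG2_ground (F : finFieldType) : {set 'M[F]_3} :=
  [set (<<v>>)%MS | v in [set v : 'rV[F]_3 | v != 0]].
Definition PG2_rank (F : finFieldType) (Y : {set 'M[F]_3}) : nat :=
  \rank (\sum_(P in Y) P)%MS.

Definition minor_ground (T : finType) (E C D : {set T}) : {set T} :=
  E :\: (C :|: D).
Definition minor_rank (T : finType) (r : {set T} -> nat) (C : {set T})
    (Y : {set T}) : nat := (r (Y :|: C) - r C)%N.

(* Contract a set C that is skew to both the PG(2,q)-restriction P and the
   U(2,q+2)-restriction L and spans M together with P.  Such a C exists by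
   roundness: take C of maximal rank skew to P and L; if C u P did not span,
   neither would C u L (it has no larger rank), and roundness yields an element
   outside both closures, which could be added to C.  In the rank-3 matroid M/C
   the sets P and L keep their structure.  Some point x of L is parallel to no
   point of P, for otherwise P would contain q + 2 collinear points.  All lines
   through x containing two points of P coincide, so removing all but one point
   of that line from P leaves q^2 + 1 points, no two collinear with x, which
   form a U(2,q^2+1) after contracting x. *)

From HB Require Import structures.
From mathcomp Require Import all_boot all_order all_algebra.
From mathcomp Require Import zify.
Set Implicit Arguments. Unset Strict Implicit. Unset Printing Implicit Defensive.

Ltac solve_set_sub :=
  apply/subsetP => ?; rewrite !inE; let H := fresh in move=> H;
  repeat (case/orP: H => H); by rewrite H ?orbT.

Lemma subset_set2 (T : finType) (A : {set T}) a b : a \in A -> b \in A ->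
  [set a; b] \subset A.
Proof. by move=> aA bA; rewrite !subUset !sub1set aA bA. Qed.

Lemma subset_set3 (T : finType) (A : {set T}) a b c : a \in A -> b \in A ->
  c \in A -> [set a; b; c] \subset A.
Proof. by move=> aA bA cA; rewrite !subUset !sub1set aA bA cA. Qed.

Lemma subset_set4 (T : finType) (A : {set T}) a b c d : a \in A -> b \in A ->
  c \in A -> d \in A -> [set a; b; c; d] \subset A.
Proof. by move=> aA bA cA dA; rewrite !subUset !sub1set aA bA cA dA. Qed.

Lemma matroid_iso_unifP (T : finType) (X : {set T}) (r : {set T} -> nat) k n :
  0 < n ->
  matroid_iso X r (@unif_ground n) (@unif_rank k n) <->
  #|X| = n /\ forall Y : {set T}, Y \subset X -> r Y = minn #|Y| k.
Proof.
move=> n_gt0; split.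
  case=> f [fi fX fr]; have cX : #|X| = n.
    by rewrite -(card_in_imset fi) fX cardsT card_ord.
  split=> // Y YX; rewrite -fr // /unif_rank card_in_imset //.
  by apply: sub_in2 fi => y; apply: (subsetP YX).
case=> cX Xr; have /card_gt0P[x0 x0X] : 0 < #|X| by rewrite cX.
pose f t := cast_ord cX (enum_rank_in x0X t).
have fi : {in X &, injective f}.
  by move=> t u tX uX /cast_ord_inj; apply: enum_rank_in_inj.
exists f; split => //.
  by apply/eqP; rewrite eqEcard subsetT cardsT card_ord card_in_imset // cX /=.
move=> Y YX; rewrite /unif_rank card_in_imset ?Xr //.
by apply: sub_in2 fi => y; apply: (subsetP YX).
Qed.

Lemma exists_subset_card (T : finType) (A : {set T}) n : n <= #|A| ->
  exists2 B : {set T}, B \subset A & #|B| = n.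
Proof.
move=> nA; exists [set x in take n (enum A)].
  by apply/subsetP => x; rewrite inE => /mem_take; rewrite mem_enum.
rewrite cardsE; have /card_uniqP -> := take_uniq n (enum_uniq A).
rewrite size_take -cardE.
by move: nA; rewrite leq_eqVlt => /orP[/eqP->|->]; rewrite ?ltnn.
Qed.

Section MatroidRank.
Variables (T : finType) (E : {set T}) (r : {set T} -> nat).
Hypothesis rM : is_matroid E r.

Lemma rank_le_card (X : {set T}) : X \subset E -> r X <= #|X|.
Proof. by case: rM => h _ _; apply: h. Qed.

Lemma rank_mono (X Y : {set T}) : X \subset Y -> Y \subset E -> r X <= r Y.
Proof. by case: rM => _ h _; apply: h. Qed.

Lemma rank_submod (X Y : {set T}) : X \subset E -> Y \subset E ->
  r (X :|: Y) + r (X :&: Y) <= r X + r Y.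
Proof. by case: rM => _ _ h; apply: h. Qed.

Lemma rank0 : r set0 = 0.
Proof. by have := rank_le_card (sub0set E); rewrite cards0; lia. Qed.

Lemma rank_submod_le (X Y Z W : {set T}) : X \subset E -> Y \subset E ->
  Z \subset X -> Z \subset Y -> W \subset X :|: Y -> r W + r Z <= r X + r Y.
Proof.
move=> XE YE ZX ZY WXY.
have XYE : X :|: Y \subset E by rewrite subUset XE.
have := rank_mono WXY XYE.
have ZXYE : X :&: Y \subset E := subset_trans (subsetIl _ _) XE.
have := @rank_mono Z (X :&: Y); rewrite subsetI ZX ZY => /(_ isT ZXYE).
have := rank_submod XE YE; lia.
Qed.

Lemma rank_subadd (X Y : {set T}) : X \subset E -> Y \subset E ->
  r (X :|: Y) <= r X + r Y.
Proof.
move=> XE YE; have := rank_submod_le XE YE (sub0set X) (sub0set Y) (subxx _).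
by rewrite rank0 addn0.
Qed.

Lemma rank_setU1 (A : {set T}) e : A \subset E -> e \in E ->
  r (A :|: [set e]) <= r A + 1.
Proof.
move=> AE eE; have eE' : [set e] \subset E by rewrite sub1set.
by have := rank_subadd AE eE'; have := rank_le_card eE'; rewrite cards1; lia.
Qed.

Lemma rank_setU_spanned (A X : {set T}) : A \subset E -> X \subset E ->
  (forall e, e \in X -> r (A :|: [set e]) <= r A) -> r (A :|: X) <= r A.
Proof.
move=> AE; have [n] := ubnP #|X|; elim: n X => [//|n IHn] X.
case: (set_0Vmem X) => [-> _ _ _|[e eX]]; first by rewrite setU0.
rewrite ltnS (cardsD1 e X) eX add1n => Xn XE spanX.
have eE : e \in E := subsetP XE e eX.
have XeE : X :\ e \subset E by apply: subset_trans XE; rewrite subsetDl.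
have AXeE : A :|: (X :\ e) \subset E by rewrite subUset AE.
have AeE : A :|: [set e] \subset E by rewrite subUset AE sub1set.
have spanXe : r (A :|: (X :\ e)) <= r A.
  by apply: IHn => // f; rewrite !inE => /andP[_ /spanX].
have AX : A :|: X \subset (A :|: (X :\ e)) :|: (A :|: [set e]).
  apply/subsetP => y; rewrite !inE; case: (y =P e) => [->|_]; rewrite ?eqxx ?orbT //=.
  by case/orP=> ->; rewrite ?orbT.
have := rank_submod_le AXeE AeE (subsetUl _ _) (subsetUl _ _) AX.
by have := spanX e eX; lia.
Qed.

Lemma rank_pair_trans a b c : a \in E -> b \in E -> c \in E -> 0 < r [set b] ->
  r [set a; b] <= 1 -> r [set b; c] <= 1 -> r [set a; c] <= 1.
Proof.
move=> aE bE cE.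
have abE := subset_set2 aE bE; have bcE := subset_set2 bE cE.
have bab : [set b] \subset [set a; b] by solve_set_sub.
have bbc : [set b] \subset [set b; c] by solve_set_sub.
have ac : [set a; c] \subset [set a; b] :|: [set b; c] by solve_set_sub.
by have := rank_submod_le abE bcE bab bbc ac; lia.
Qed.

Lemma rank_setU1_parallel (A : {set T}) x e : A \subset E -> x \in A ->
  e \in E -> r [set x; e] <= r [set x] -> r (A :|: [set e]) <= r A.
Proof.
move=> AE xA eE xe.
have xeE : [set x; e] \subset E by rewrite subset_set2 // (subsetP AE).
have xsub : [set x] \subset A by rewrite sub1set.
have Ae : A :|: [set e] \subset A :|: [set x; e] by solve_set_sub.
by have := rank_submod_le AE xeE xsub (subsetUl _ _) Ae; lia.
Qed.

Lemma rank_line_setU1 a b x c : a \in E -> b \in E -> x \in E -> c \in E ->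
  r [set a; b] = 2 -> r [set a; b; x] <= 2 -> r [set a; b; c] <= 2 ->
  r [set a; b; x; c] <= 2.
Proof.
move=> aE bE xE cE ab abx abc.
have ab_abx : [set a; b] \subset [set a; b; x] by solve_set_sub.
have ab_abc : [set a; b] \subset [set a; b; c] by solve_set_sub.
have abxc : [set a; b; x; c] \subset [set a; b; x] :|: [set a; b; c] by solve_set_sub.
have := rank_submod_le (subset_set3 aE bE xE) (subset_set3 aE bE cE) ab_abx ab_abc abxc.
by rewrite ab; lia.
Qed.

Definition skew (X Y : {set T}) := r (X :|: Y) = r X + r Y.

Lemma skewS (C X Y : {set T}) : X \subset E -> C \subset E -> skew C X ->
  Y \subset X -> skew C Y.
Proof.
move=> XE CE CX YX; have YE := subset_trans YX XE.
have CYE : C :|: Y \subset E by rewrite subUset CE.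
apply/eqP; rewrite eqn_leq rank_subadd //=.
have sub : C :|: X \subset (C :|: Y) :|: X.
  by apply/subsetP => z; rewrite !inE; case/orP => ->; rewrite ?orbT.
by have := rank_submod_le CYE XE (subsetUr _ _) YX sub; rewrite CX; lia.
Qed.

Lemma skew_setU1 (C X : {set T}) e : C \subset E -> X \subset E -> e \in E ->
  skew C X -> r (C :|: X) < r (C :|: X :|: [set e]) ->
  skew (C :|: [set e]) X /\ r (C :|: [set e]) = (r C).+1.
Proof.
move=> CE XE eE; rewrite /skew => CX ltCXe.
have CeE : C :|: [set e] \subset E by rewrite subUset CE sub1set.
have CXE : C :|: X \subset E by rewrite subUset CE.
have -> : C :|: [set e] :|: X = C :|: X :|: [set e] by rewrite setUAC.
have := rank_subadd CeE XE; rewrite setUAC.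
by have := rank_setU1 CE eE; have := rank_setU1 CXE eE; split; lia.
Qed.

Lemma is_matroid_contract (C : {set T}) : C \subset E ->
  is_matroid E (minor_rank r C).
Proof.
move=> CE; rewrite /minor_rank.
have rC_le (Y : {set T}) : Y \subset E -> r C <= r (Y :|: C).
  by move=> YE; apply: rank_mono (subsetUr Y C) _; rewrite subUset YE.
split.
- move=> X XE; have := rank_subadd XE CE; have := rank_le_card XE; lia.
- move=> X Y XY YE; have := rank_mono (setSU C XY); rewrite subUset YE CE.
  by move=> /(_ isT); have := rC_le X (subset_trans XY YE); lia.
- move=> X Y XE YE.
  have := @rank_submod (X :|: C) (Y :|: C); rewrite !subUset XE YE CE.
  rewrite -setUUl -setUIl => /(_ isT isT).
  have := rC_le _ (subset_trans (subsetIl X Y) XE).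
  have := rC_le (X :|: Y); rewrite subUset XE YE => /(_ isT).
  by have := rC_le X XE; have := rC_le Y YE; lia.
Qed.

Lemma minor_rank_skew (C X Y : {set T}) : X \subset E -> C \subset E ->
  skew C X -> Y \subset X -> minor_rank r C Y = r Y.
Proof.
by move=> XE CE CX YX; rewrite /minor_rank setUC (skewS XE CE CX YX) addKn.
Qed.

Lemma minor_rank_setU (C D Y : {set T}) : C \subset E -> D \subset E ->
  Y \subset E ->
  minor_rank r (C :|: D) Y = minor_rank r C (Y :|: D) - minor_rank r C D.
Proof.
move=> CE DE YE; rewrite /minor_rank (setUC C D) setUA.
have DCE : D :|: C \subset E by rewrite subUset DE.
have := rank_mono (subsetUr D C) DCE.
have := @rank_mono (D :|: C) (Y :|: D :|: C).
rewrite -setUA subsetUr !subUset YE DE CE => /(_ isT isT); lia.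
Qed.

Lemma round_outside_closures (A B : {set T}) : round E r ->
  A \subset E -> B \subset E -> r A < r E -> r B < r E ->
  exists2 e, e \in E & (r A < r (A :|: [set e])) && (r B < r (B :|: [set e])).
Proof.
move=> rE AE BE ltA ltB.
have [/exists_inP //|/exists_inPn out] := boolP [exists e in E,
  (r A < r (A :|: [set e])) && (r B < r (B :|: [set e]))].
pose X := [set e in E | r (A :|: [set e]) <= r A].
have XE : X \subset E by apply/subsetP => e; rewrite inE => /andP[].
have ltX : r X < r E.
  have spanX : r (A :|: X) <= r A.
    by apply: rank_setU_spanned => // e; rewrite inE => /andP[].
  by have := rank_mono (subsetUr A X); rewrite subUset AE XE => /(_ isT); lia.
have ltXc : r (E :\: X) < r E.
  have spanXc : r (B :|: (E :\: X)) <= r B.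
    apply: rank_setU_spanned => //; first exact: subsetDl.
    move=> e; rewrite !inE => /andP[eX eE]; move: eX (out e eE).
    by rewrite eE /= -ltnNge => ->; rewrite -leqNgt.
  have := rank_mono (subsetUr B (E :\: X)); rewrite subUset BE subsetDl.
  by move=> /(_ isT); lia.
have XXc : X :&: (E :\: X) = set0.
  by rewrite setIDA (setIidPl XE) setDv.
have XXcE : X :|: (E :\: X) = E.
  apply/setP => z; rewrite in_setU in_setD.
  by case: (boolP (z \in X)) => [/(subsetP XE)|]; rewrite ?orbT.
by case: (rE X (E :\: X) XXcE XXc) => h; [move: ltX | move: ltXc]; rewrite h ltnn.
Qed.

Lemma round_skew_spanning (P L : {set T}) : round E r ->
  P \subset E -> L \subset E -> r L <= r P ->
  exists C : {set T}, [/\ C \subset E, skew C P, skew C L & r E <= r (C :|: P)].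
Proof.
move=> rE PE LE rLP.
pose ok (C : {set T}) :=
  [&& C \subset E, r (C :|: P) == r C + r P & r (C :|: L) == r C + r L].
have ok0 : ok set0 by rewrite /ok sub0set !set0U rank0 !eqxx.
case: (arg_maxnP r ok0) => C /and3P[CE /eqP CP /eqP CL] Cmax.
exists C; split => //; rewrite leqNgt; apply/negP => ltP.
have CPE : C :|: P \subset E by rewrite subUset CE.
have CLE : C :|: L \subset E by rewrite subUset CE.
have ltL : r (C :|: L) < r E by rewrite CL; rewrite CP in ltP; lia.
have [e eE /andP[eP eL]] := round_outside_closures rE CPE CLE ltP ltL.
have [CeP rCe] := skew_setU1 CE PE eE CP eP.
have [CeL _] := skew_setU1 CE LE eE CL eL.
have := Cmax (C :|: [set e]); rewrite /ok subUset CE sub1set eE CeP CeL !eqxx.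
by rewrite rCe => /(_ isT) /=; rewrite ltnn.
Qed.

Lemma unif_minor_of_contraction (C S : {set T}) x n : C \subset E ->
  x \in E -> S \subset E -> #|S| = n -> 0 < n ->
  (forall Y : {set T}, Y \subset S -> minor_rank r C (Y :|: [set x]) = minn #|Y| 2 + 1) ->
  exists C' D : {set T}, [/\ C' \subset E, D \subset E, [disjoint C' & D] &
    matroid_iso (minor_ground E C' D) (minor_rank r C')
      (@unif_ground n) (@unif_rank 2 n)].
Proof.
move=> CE xE SE cS n_gt0 rS.
have rx : minor_rank r C [set x] = 1 by have := rS set0 (sub0set S); rewrite set0U cards0.
have S_off y : y \in S -> (y \notin C) && (y != x).
  move=> yS; have := rS [set y]; rewrite sub1set yS cards1 => /(_ isT) ry.
  apply/andP; split; apply/negP; last by move/eqP=> yx; rewrite yx setUid rx in ry.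
  move=> yC; have yxC : [set y] :|: [set x] :|: C = [set x] :|: C.
    by apply/setP => z; rewrite !inE; case: (z =P y) => [->|]; rewrite ?yC ?orbT.
  by move: ry rx; rewrite /minor_rank yxC => ->.
exists (C :|: [set x]), (E :\: (C :|: [set x] :|: S)); split.
- by rewrite subUset CE sub1set.
- exact: subsetDl.
- by rewrite disjoint_subset; apply/subsetP => z zCx; rewrite inE /= in_setD in_setU zCx.
have -> : minor_ground E (C :|: [set x]) (E :\: (C :|: [set x] :|: S)) = S.
  apply/setP => y; rewrite /minor_ground !inE.
  case yS: (y \in S); last by case: (y \in C); case: (y == x); case: (y \in E).
  by case/andP: (S_off y yS) => /negbTE-> /negbTE->; rewrite (subsetP SE).
apply/matroid_iso_unifP => //; split=> // Y YS.
have YE := subset_trans YS SE; rewrite minor_rank_setU ?sub1set //.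
by rewrite rS // rx addnK.
Qed.

End MatroidRank.

Section ProjectivePlane.
Import GRing.Theory.
Variable F : finFieldType.
Local Notation q := #|F|.

Definition PG2_vectors (W : 'M[F]_3) := [set v : 'rV[F]_3 | (v <= W)%MS].
Definition PG2_points (W : 'M[F]_3) := [set <<v>>%MS | v in PG2_vectors W :\ 0%R].

Lemma card_PG2_vectors W : #|PG2_vectors W| = q ^ \rank W.
Proof.
have -> : PG2_vectors W = [set (u *m row_base W)%R | u in [set: 'rV_(\rank W)]].
  apply/setP => v; rewrite inE; apply/idP/imsetP.
  - move=> vW; have : (v <= row_base W)%MS by rewrite eq_row_base.
    by case/submxP => u ->; exists u; rewrite ?inE.
  - by case=> u _ ->; rewrite -(eq_row_base W) submxMl.
rewrite card_imset; last exact: row_free_inj (row_base_free W).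
by rewrite cardsT card_mx mul1n.
Qed.

Lemma card_vectors_on_point W (v : 'rV[F]_3) : v != 0%R -> (v <= W)%MS ->
  #|[set w in PG2_vectors W :\ 0%R | <<w>>%MS == <<v>>%MS]| = q.-1.
Proof.
move=> v0 vW.
have -> : [set w in PG2_vectors W :\ 0%R | <<w>>%MS == <<v>>%MS] =
          [set (c *: v)%R | c in [set~ 0%R]].
  apply/setP => w; rewrite !inE; apply/idP/idP.
  - case/andP => /andP [w0 wW] /eqP /genmxP /eqmxP wv.
    have /submxP[D wD] : (w <= v)%MS by rewrite wv.
    have wc : w = (D ord0 ord0 *: v)%R by rewrite wD {1}(mx11_scalar D) mul_scalar_mx.
    rewrite wc; apply: imset_f; rewrite !inE; apply: contraNneq w0 => D0.
    by rewrite wc D0 scale0r.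
  - case/imsetP=> c; rewrite !inE => c0 ->.
    rewrite scaler_eq0 negb_or c0 v0 scalemx_sub //=.
    by apply/eqP/genmxP/eqmxP; apply: eqmx_scale.
rewrite card_in_imset ?cardsC1 // => c d _ _ /eqP.
by rewrite -subr_eq0 -scalerBl scaler_eq0 (negbTE v0) orbF subr_eq0 => /eqP.
Qed.

Lemma card_PG2_points W : (#|PG2_points W| * q.-1)%N = (q ^ \rank W).-1.
Proof.
have := cardsD1 0%R (PG2_vectors W).
rewrite card_PG2_vectors inE sub0mx add1n => -> /=; symmetry.
rewrite -sum1_card (partition_big_imset (fun v => <<v>>%MS)) /= -/(PG2_points W).
rewrite -sum_nat_const; apply: eq_bigr => Q /imsetP [v vN ->].
move: vN; rewrite !inE => /andP [v0 vW].
rewrite -(card_vectors_on_point v0 vW) -sum1_card.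
by apply: eq_bigl => w; rewrite !inE.
Qed.

Lemma PG2_ground_points : PG2_ground F = PG2_points 1%:M%R.
Proof.
rewrite /PG2_ground /PG2_points.
have -> : PG2_vectors 1%:M%R :\ 0%R = [set v : 'rV[F]_3 | v != 0%R].
  by apply/setP => v; rewrite !inE submx1 andbT.
by [].
Qed.

Lemma card_PG2_ground : #|PG2_ground F| = (q ^ 2 + q + 1)%N.
Proof.
have := card_PG2_points 1%:M%R; rewrite mxrank1 -PG2_ground_points.
have := card_finNzRing_gt1 F; case: q => [|[|m]] // _.
set N := #|PG2_ground F| => /eqP; rewrite !expnS expn0 /= => /eqP h.
by apply/eqP; rewrite -(@eqn_pmul2r m.+1) //; apply/eqP; rewrite h; nia.
Qed.

Lemma PG2_groundP Q : Q \in PG2_ground F -> exists2 v : 'rV[F]_3, v != 0%R & Q = <<v>>%MS.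
Proof. by case/imsetP => v; rewrite inE => v0 ->; exists v. Qed.

Lemma rank_PG2_point Q : Q \in PG2_ground F -> \rank Q = 1.
Proof. by case/PG2_groundP => v v0 ->; rewrite genmxE rank_rV v0. Qed.

Lemma PG2_rank_le3 (A : {set 'M[F]_3}) : PG2_rank A <= 3.
Proof. exact: rank_leq_col. Qed.

Lemma rank_PG2_adds Q1 Q2 : Q1 \in PG2_ground F -> Q2 \in PG2_ground F ->
  Q1 != Q2 -> \rank (Q1 + Q2)%MS = 2.
Proof.
move=> Q1G Q2G; apply: contraNeq => rQ12.
have r1 := rank_PG2_point Q1G; have r2 := rank_PG2_point Q2G.
have le1 : \rank (Q1 + Q2)%MS <= 1.
  by have := leq_of_leqif (mxrank_adds_leqif Q1 Q2); rewrite r1 r2; lia.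
have e1 : (Q1 + Q2 <= Q1)%MS.
  by rewrite -(geq_leqif (mxrank_leqif_sup (addsmxSl Q1 Q2))) r1.
have e2 : (Q1 + Q2 <= Q2)%MS.
  by rewrite -(geq_leqif (mxrank_leqif_sup (addsmxSr Q1 Q2))) r2.
case/PG2_groundP: Q1G e1 e2 => v1 _ ->; case/PG2_groundP: Q2G => v2 _ -> e1 e2.
have s12 := submx_trans (addsmxSl _ _) e2; have s21 := submx_trans (addsmxSr _ _) e1.
by rewrite !genmxE in s12 s21; apply/eqP/genmxP/andP.
Qed.

Lemma PG2_rank1 Q : Q \in PG2_ground F -> PG2_rank [set Q] = 1.
Proof. by move=> QG; rewrite /PG2_rank big_set1 rank_PG2_point. Qed.

Lemma PG2_rank2 Q1 Q2 : Q1 \in PG2_ground F -> Q2 \in PG2_ground F ->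
  Q1 != Q2 -> PG2_rank [set Q1; Q2] = 2.
Proof.
by move=> Q1G Q2G Q12; rewrite /PG2_rank big_setU1 ?big_set1 ?rank_PG2_adds ?inE.
Qed.

Lemma PG2_line_card (A : {set 'M[F]_3}) : A \subset PG2_ground F ->
  PG2_rank A <= 2 -> #|A| <= q + 1.
Proof.
move=> AG rA; set W := (\sum_(P in A) P)%MS.
have AW : A \subset PG2_points W.
  apply/subsetP => Q QA; have [v v0 EQ] := PG2_groundP (subsetP AG Q QA).
  rewrite EQ; apply: imset_f; rewrite !inE v0 /=.
  by have := sumsmx_sup Q QA (submx_refl Q); rewrite EQ genmxE.
apply: leq_trans (subset_leq_card AW) _.
have := card_PG2_points W; have := card_finNzRing_gt1 F.
have : q ^ \rank W <= q ^ 2 by rewrite leq_pexp2l // ltnW // card_finNzRing_gt1.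
case: q => [|[|m]] // lt2 _ h.
rewrite -(@leq_pmul2r m.+1) //= h; move: lt2; rewrite !expnS expn0; nia.
Qed.

Lemma PG2_lines_meet Q1 Q2 Q3 Q4 : Q1 \in PG2_ground F -> Q2 \in PG2_ground F ->
  Q3 \in PG2_ground F -> Q4 \in PG2_ground F -> Q1 != Q2 -> Q3 != Q4 ->
  exists2 Q, Q \in PG2_ground F &
    PG2_rank [set Q1; Q2; Q] <= 2 /\ PG2_rank [set Q3; Q4; Q] <= 2.
Proof.
move=> Q1G Q2G Q3G Q4G Q12 Q34.
set W1 := (Q1 + Q2)%MS; set W2 := (Q3 + Q4)%MS.
have r1 : \rank W1 = 2 by apply: rank_PG2_adds.
have r2 : \rank W2 = 2 by apply: rank_PG2_adds.
have W12_neq0 : (W1 :&: W2)%MS != 0%R.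
  rewrite -mxrank_eq0; have := mxrank_sum_cap W1 W2.
  by have := rank_leq_col (W1 + W2)%MS; rewrite r1 r2; lia.
set v := nz_row (W1 :&: W2)%MS.
have v0 : v != 0%R by rewrite nz_row_eq0.
have vW (W : 'M_3) : (W1 :&: W2 <= W)%MS -> (<<v>> <= W)%MS.
  by rewrite genmxE; apply: submx_trans (nz_row_sub _).
have line_rank Qa Qb : (<<v>> <= Qa + Qb)%MS ->
    PG2_rank [set Qa; Qb; <<v>>%MS] <= \rank (Qa + Qb)%MS.
  move=> vQ; apply: mxrankS; apply/sumsmx_subP => Q.
  by rewrite !inE => /orP[/orP[]|] /eqP->; rewrite ?addsmxSl ?addsmxSr.
exists <<v>>%MS; first by apply: imset_f; rewrite inE.
split.
- by apply: leq_trans (line_rank Q1 Q2 (vW _ (capmxSl _ _))) _; rewrite r1.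
- by apply: leq_trans (line_rank Q3 Q4 (vW _ (capmxSr _ _))) _; rewrite r2.
Qed.

End ProjectivePlane.

Section PlaneRestriction.
Variables (F : finFieldType) (T : finType) (E : {set T}) (s : {set T} -> nat).
Hypothesis sM : is_matroid E s.
Variables (P : {set T}) (g : T -> 'M[F]_3).
Hypotheses (PE : P \subset E) (g_inj : {in P &, injective g}).
Hypothesis gP : g @: P = PG2_ground F.
Hypothesis g_rank : forall Y : {set T}, Y \subset P -> PG2_rank (g @: Y) = s Y.
Local Notation q := #|F|.

Lemma g_PG2 p : p \in P -> g p \in PG2_ground F.
Proof. by move=> pP; rewrite -gP imset_f. Qed.

Lemma rank_P1 p : p \in P -> s [set p] = 1.
Proof. by move=> pP; rewrite -g_rank ?sub1set // imset_set1 PG2_rank1 ?g_PG2. Qed.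

Lemma rank_P2 p p' : p \in P -> p' \in P -> p != p' -> s [set p; p'] = 2.
Proof.
move=> pP p'P pp'; rewrite -g_rank ?subset_set2 // imsetU1 imset_set1.
by rewrite PG2_rank2 ?g_PG2 //; apply: contra pp' => /eqP/g_inj->.
Qed.

Lemma rank_P_le3 : s P <= 3.
Proof. by rewrite -g_rank // PG2_rank_le3. Qed.

Lemma card_P : #|P| = (q ^ 2 + q + 1)%N.
Proof. by rewrite -card_PG2_ground -gP card_in_imset. Qed.

Lemma rank2_le_rank_P : 2 <= s P.
Proof.
have : 1 < #|P|.
  by rewrite card_P addn1 ltnS (leq_trans _ (leq_addl _ _)) // ltnW // card_finNzRing_gt1.
case/card_gt1P => p [p' [pP p'P pp']].
by rewrite -(rank_P2 pP p'P pp') (rank_mono sM _ PE) ?subset_set2.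
Qed.

Lemma P_line_card (Y : {set T}) : Y \subset P -> s Y <= 2 -> #|Y| <= q + 1.
Proof.
move=> YP sY; rewrite -(card_in_imset (f := g)).
  by apply: PG2_line_card; rewrite ?g_rank // -gP imsetS.
by apply: sub_in2 g_inj => y; apply: (subsetP YP).
Qed.

Lemma P_lines_meet p1 p2 p3 p4 : p1 \in P -> p2 \in P -> p3 \in P -> p4 \in P ->
  p1 != p2 -> p3 != p4 ->
  exists2 c, c \in P & s [set p1; p2; c] <= 2 /\ s [set p3; p4; c] <= 2.
Proof.
move=> p1P p2P p3P p4P p12 p34.
have g_neq a b : a \in P -> b \in P -> a != b -> g a != g b.
  by move=> aP bP; apply: contra => /eqP/g_inj->.
have [Q] := PG2_lines_meet (g_PG2 p1P) (g_PG2 p2P) (g_PG2 p3P) (g_PG2 p4P)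
  (g_neq _ _ p1P p2P p12) (g_neq _ _ p3P p4P p34).
rewrite -gP => /imsetP[c cP ->] [r12 r34].
by exists c => //; split; rewrite -g_rank ?subset_set3 // !imsetU !imset_set1.
Qed.

End PlaneRestriction.

Section LineOffPlane.
Variables (F : finFieldType) (T : finType) (E : {set T}) (s : {set T} -> nat).
Hypothesis sM : is_matroid E s.
Variables (P L : {set T}) (g : T -> 'M[F]_3).
Hypotheses (PE : P \subset E) (LE : L \subset E) (g_inj : {in P &, injective g}).
Hypothesis gP : g @: P = PG2_ground F.
Hypothesis g_rank : forall Y : {set T}, Y \subset P -> PG2_rank (g @: Y) = s Y.
Hypothesis card_L : #|L| = (#|F| + 2)%N.
Hypothesis rank_L : forall Y : {set T}, Y \subset L -> s Y = minn #|Y| 2.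
Local Notation q := #|F|.

Lemma rank_L1 y : y \in L -> s [set y] = 1.
Proof. by move=> yL; rewrite rank_L ?sub1set // cards1. Qed.

(* Otherwise a parallel partner in P of each point of L would put q + 2 points
   of P on a line. *)
Lemma exists_L_offP : exists2 x, x \in L & forall p, p \in P -> 2 <= s [set x; p].
Proof.
have [/exists_inP[x xL /forall_inP x_off]|/exists_inPn noX] :=
  boolP [exists x in L, [forall p in P, 1 < s [set x; p]]]; first by exists x.
pose h x := odflt x [pick p in P | s [set x; p] <= 1].
have hP x : x \in L -> h x \in P /\ s [set x; h x] <= 1.
  move=> xL; rewrite /h; case: pickP => [p /andP[] //|none].
  have /forall_inPn[p pP] := noX x xL; rewrite -leqNgt => px.
  by move: (none p); rewrite /= pP px.
have h_inj : {in L &, injective h}.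
  move=> x y xL yL hxy; apply/eqP; apply: contraT => xy.
  have [hxP hx] := hP x xL; have [_ hy] := hP y yL.
  have hxy1 : s [set h x; y] <= 1 by rewrite setUC hxy.
  have := rank_pair_trans sM (subsetP LE x xL) (subsetP PE _ hxP) (subsetP LE y yL).
  rewrite (rank_P1 gP g_rank hxP) (rank_L (Y := [set x; y])) ?subset_set2 // cards2 xy.
  by move=> /(_ isT hx hxy1).
have hLP : h @: L \subset P by apply/subsetP => _ /imsetP[x xL ->]; case: (hP x xL).
have hLE : h @: L \subset E := subset_trans hLP PE.
have spanL : s (L :|: h @: L) <= s L.
  apply: (rank_setU_spanned sM) => // _ /imsetP[x xL ->]; have [hxP hx] := hP x xL.
  apply: (rank_setU1_parallel sM LE xL (subsetP PE _ hxP)).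
  by rewrite rank_L1.
have rank_hL : s (h @: L) <= 2.
  have := rank_mono sM (subsetUr L (h @: L)); rewrite subUset LE hLE.
  by have := rank_L (subxx L); rewrite card_L; lia.
by have := P_line_card g_inj gP g_rank hLP rank_hL; rewrite card_in_imset // card_L; lia.
Qed.

Hypothesis sE3 : s E <= 3.
Variable x : T.
Hypotheses (xL : x \in L) (x_offP : forall p, p \in P -> 2 <= s [set x; p]).

Let xE : x \in E := subsetP LE x xL.

Definition on_secant p := [exists p' in P, (p' != p) && (s [set p; p'; x] <= 2)].

Lemma non_secant_rank3 p p' : p \in P -> ~~ on_secant p -> p' \in P -> p' != p ->
  3 <= s [set p; p'; x].
Proof. by move=> pP /exists_inPn/(_ p') nb p'P p'p; move: (nb p'P); rewrite p'p; lia. Qed.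

(* Two lines through x carrying points of P meet in a point c of P; since x and
   c are independent, the lines coincide. *)
Lemma rank_secant_points b0 : b0 \in P -> on_secant b0 ->
  s [set p in P | on_secant p] <= 2.
Proof.
move=> b0P /exists_inP[b0' b0'P /andP[b0'b0 rK]]; rewrite eq_sym in b0'b0.
set K := [set b0; b0'; x]; set B := [set p in P | on_secant p].
have memPE p : p \in P -> p \in E := subsetP PE p.
have KE : K \subset E.
  by apply: subset_set3; [apply: memPE b0P | apply: memPE b0'P | apply: xE].
have BE : B \subset E.
  by apply: subset_trans PE; apply/subsetP => p; rewrite inE => /andP[].
have rK2 : 2 <= s K.
  rewrite -(rank_P2 g_inj gP g_rank b0P b0'P b0'b0).
  by rewrite (rank_mono sM _ KE) // subset_set2 // !inE eqxx ?orbT.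
have := rank_mono sM (subsetUr K B); rewrite subUset KE BE => /(_ isT).
move/leq_trans; apply; apply: (leq_trans _ rK); apply: (rank_setU_spanned sM) => // b.
rewrite inE => /andP[bP /exists_inP[b' b'P /andP[b'b rb]]]; rewrite eq_sym in b'b.
have [c cP [rc0 rc]] := P_lines_meet g_inj gP g_rank b0P b0'P bP b'P b0'b0 b'b.
have rx0 := rank_line_setU1 sM (memPE _ b0P) (memPE _ b0'P) xE (memPE _ cP)
  (rank_P2 g_inj gP g_rank b0P b0'P b0'b0) rK rc0.
have rx := rank_line_setU1 sM (memPE _ bP) (memPE _ b'P) xE (memPE _ cP)
  (rank_P2 g_inj gP g_rank bP b'P b'b) rb rc.
have xc0 : [set x; c] \subset [set b0; b0'; x; c] by solve_set_sub.
have xc : [set x; c] \subset [set b; b'; x; c] by solve_set_sub.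
have Kb : K :|: [set b] \subset [set b0; b0'; x; c] :|: [set b; b'; x; c].
  by rewrite /K; solve_set_sub.
have := rank_submod_le sM (subset_set4 (memPE _ b0P) (memPE _ b0'P) xE (memPE _ cP))
  (subset_set4 (memPE _ bP) (memPE _ b'P) xE (memPE _ cP)) xc0 xc Kb.
have := x_offP cP; move: rx0 rx rK2; clear; lia.
Qed.

Lemma rank_setU1_x (S : {set T}) : S \subset P ->
  (forall p p', p \in S -> p' \in S -> p != p' -> 3 <= s [set p; p'; x]) ->
  forall Y : {set T}, Y \subset S -> s (Y :|: [set x]) = minn #|Y| 2 + 1.
Proof.
move=> SP S3 Y YS; have YP := subset_trans YS SP.
have YxE : Y :|: [set x] \subset E by rewrite subUset (subset_trans YP PE) sub1set.
have [Y2 | ] := ltnP 1 #|Y|.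
  have /card_gt1P[p [p' [pY p'Y pp']]] := Y2.
  apply/eqP; rewrite (minn_idPr Y2) eqn_leq.
  have sub : [set p; p'; x] \subset Y :|: [set x].
    by rewrite subset_set3 // !inE ?pY ?p'Y ?eqxx ?orbT.
  rewrite (leq_trans (rank_mono sM YxE (subxx E))) //= ?sE3 //.
  apply: leq_trans _ (rank_mono sM sub YxE).
  exact: S3 (subsetP YS p pY) (subsetP YS p' p'Y) pp'.
rewrite leq_eqVlt ltnS leqn0 => /orP[/cards1P[p Yp] | /eqP/cards0_eq->]; last first.
  by rewrite set0U cards0 rank_L1.
have pP : p \in P by rewrite -sub1set -Yp.
rewrite Yp cards1; apply/eqP; rewrite eqn_leq setUC x_offP // andbT.
have := @rank_setU1 _ _ _ sM [set x] p; rewrite sub1set xE (subsetP PE p pP) rank_L1 //.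
by move=> /(_ isT isT).
Qed.

Lemma exists_uniform_with_x : exists S : {set T},
  [/\ S \subset P, #|S| = (q ^ 2 + 1)%N &
    forall Y : {set T}, Y \subset S -> s (Y :|: [set x]) = minn #|Y| 2 + 1].
Proof.
suff [S0 [S0P cS0 S0x]] : exists S0 : {set T}, [/\ S0 \subset P,
    q ^ 2 + 1 <= #|S0| & forall p p', p \in S0 -> p' \in S0 -> p != p' ->
      3 <= s [set p; p'; x]].
  have [S SS0 cS] := exists_subset_card cS0; have SP := subset_trans SS0 S0P.
  exists S; split=> //; apply: rank_setU1_x SP _ => p p' pS p'S.
  by apply: S0x; apply: (subsetP SS0).
set B := [set p in P | on_secant p].
have [B0 | [b0 b0B]] := set_0Vmem B.
  exists P; split => //; first by rewrite (card_P g_inj gP) -addnA leq_add2l leq_addl.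
  move=> p p' pP p'P pp'; apply: non_secant_rank3; rewrite 1?eq_sym //.
  apply: contraT => /negbNE secp; have : p \in B by rewrite inE pP.
  by rewrite B0 in_set0.
have BP : B \subset P by apply/subsetP => p; rewrite inE => /andP[].
have b0P : b0 \in P := subsetP BP b0 b0B.
have cB := P_line_card g_inj gP g_rank BP (rank_secant_points b0P _).
exists ((P :\: B) :|: [set b0]); split.
- by rewrite subUset subsetDl sub1set.
- rewrite setUC cardsU1 inE b0B /= cardsD (setIidPr BP) (card_P g_inj gP).
  by move: b0B cB; rewrite inE => /andP[_ secb0] /(_ secb0); move: (q ^ 2) => n; lia.
- have nsec p : p \in P :\: B -> ~~ on_secant p.
    by rewrite in_setD => /andP[pB pP]; apply: contra pB => secp; rewrite inE pP.
  have PBP := subsetP (subsetDl P B).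
  move=> p p'; rewrite !in_setU !in_set1 => /orP[pPB|/eqP->] /orP[p'PB|/eqP->] pp';
    rewrite 1?eq_sym in pp'.
  + exact: non_secant_rank3 (PBP _ pPB) (nsec _ pPB) (PBP _ p'PB) pp'.
  + exact: non_secant_rank3 (PBP _ pPB) (nsec _ pPB) b0P pp'.
  + have -> : [set b0; p'; x] = [set p'; b0; x].
      by apply/setP => z; rewrite !inE (orbC (z == b0)).
    by apply: non_secant_rank3 (PBP _ p'PB) (nsec _ p'PB) b0P _; rewrite eq_sym.
  + by rewrite eqxx in pp'.
Qed.

End LineOffPlane.

Theorem lemma2p2 (F : finFieldType) (T : finType) (E : {set T})
    (r : {set T} -> nat) :
  is_matroid E r -> round E r ->
  (exists X : {set T}, X \subset E /\
     matroid_iso X r (@unif_ground (#|F| + 2)%N) (@unif_rank 2 (#|F| + 2)%N)) ->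
  (exists X : {set T}, X \subset E /\
     matroid_iso X r (PG2_ground F) (@PG2_rank F)) ->
  exists C D : {set T}, [/\ C \subset E, D \subset E, [disjoint C & D] &
     matroid_iso (minor_ground E C D) (minor_rank r C)
       (@unif_ground (#|F| ^ 2 + 1)%N) (@unif_rank 2 (#|F| ^ 2 + 1)%N)].
Proof.
move=> rM rE [L [LE L_unif]] [P [PE [g [g_inj gP g_rank]]]].
have [cL rL] := (@matroid_iso_unifP _ L r 2 _ (ltn_addl _ (ltn0Sn 1))).1 L_unif.
have rLP : r L <= r P.
  by rewrite rL // cL (minn_idPr (leq_addl _ _)) (rank2_le_rank_P rM PE g_inj gP g_rank).
have [C [CE CP CL spanE]] := round_skew_spanning rM rE PE LE rLP.
have sM := is_matroid_contract rM CE.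
have g_rank' (Y : {set T}) : Y \subset P -> PG2_rank (g @: Y) = minor_rank r C Y.
  by move=> YP; rewrite (minor_rank_skew rM PE CE CP) ?g_rank.
have rL' (Y : {set T}) : Y \subset L -> minor_rank r C Y = minn #|Y| 2.
  by move=> YL; rewrite (minor_rank_skew rM LE CE CL) ?rL.
have sE3 : minor_rank r C E <= 3.
  rewrite /minor_rank (setUidPl CE); have := rank_P_le3 g_rank.
  by move: CP; rewrite /skew; lia.
have [x xL x_offP] := exists_L_offP sM PE LE g_inj gP g_rank' cL rL'.
have [S [SP cS Sx]] :=
  exists_uniform_with_x sM PE LE g_inj gP g_rank' cL rL' sE3 xL x_offP.
have n_gt0 : 0 < #|F| ^ 2 + 1 by rewrite addn1.
exact (unif_minor_of_contraction rM CE (subsetP LE x xL) (subset_trans SP PE)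
  cS n_gt0 Sx).
Qed.
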